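(* A function $f:\Omega_D\to\mathbb{O}$ is both slice Fueter-regular and slice regular if and only if it is constant.
   Context: Octonions $\mathbb{O}=\mathbb{H}+\ell\mathbb{H}$ (Cayley–Dickson product $(a+\ell b)(c+\ell d)=(ac-d\bar b)+\ell(\bar a d+cb)$), identified with $\mathbb{R}^8$; $\mathbb{S}=\{I\in\mathbb{O}:I^2=-1\}$. $D\subset\mathbb{R}^2$ is a non-empty open set invariant under $(x_0,x_1)\mapsto(x_0,-x_1)$, $\Omega_D=\{x_0+x_1I:(x_0,x_1)\in D,I\in\mathbb{S}\}$, assumed connected. A stem function is $F=(F_1,F_2):D\to\mathbb{O}^2$ with $F_1$ even and $F_2$ odd in $x_1$; it induces the slice function $f(x_0+x_1I)=F_1(x_0,x_1)+IF_2(x_0,x_1)$. A slice function is slice regular if its stem function $F$ is $C^1$ and $\frac{\partial F_1}{\partial x_0}=\frac{\partial F_2}{\partial x_1}$, $\frac{\partial F_1}{\partial x_1}=-\frac{\partial F_2}{\partial x_0}$ on $D$. Let $E=\{(x_0,x_1,x_2,x_3):(x_0,(x_1^2+x_2^2+x_3^2)^{1/2})\in D\}$, $\mathcal N=\{(I,J)\in\mathbb{S}^2:I\perp J\}$, and let $O(3)$ be the real orthogonal $4\times4$ matrices fixing the first basis vector, acting on $\mathbb{R}^4$, $\mathbb{O}^4$ by matrix–column multiplication. $f:\Omega_D\to\mathbb{O}$ is slice Fueter-regular if there is $\mathcal F=(\mathcal F_0,\dots,\mathcal F_3):E\to\mathbb{O}^4$ of class $C^1$ with $\mathcal F(Av)=A\mathcal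 F(v)$ ($A\in O(3)$), $f(x_0+x_1I+x_2J+x_3(IJ))=\mathcal F_0(v)+I\mathcal F_1(v)+J\mathcal F_2(v)+(IJ)\mathcal F_3(v)$ for all $v=(x_0,\dots,x_3)\in E$, $(I,J)\in\mathcal N$, and $\partial_0\mathcal F_0-\partial_1\mathcal F_1-\partial_2\mathcal F_2-\partial_3\mathcal F_3=0$, $\partial_1\mathcal F_0+\partial_0\mathcal F_1-\partial_3\mathcal F_2+\partial_2\mathcal F_3=0$, $\partial_2\mathcal F_0+\partial_3\mathcal F_1+\partial_0\mathcal F_2-\partial_1\mathcal F_3=0$, $\partial_3\mathcal F_0-\partial_2\mathcal F_1+\partial_1\mathcal F_2+\partial_0\mathcal F_3=0$ on $E$. *)

From HB Require Import structures.
From mathcomp Require Import all_boot all_order all_algebra.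
From mathcomp Require Import all_classical all_reals all_analysis.

Set Implicit Arguments.
Unset Strict Implicit.
Unset Printing Implicit Defensive.

Import Order.TTheory GRing.Theory Num.Theory.
Import numFieldNormedType.Exports.
Local Open Scope classical_set_scope.
Local Open Scope ring_scope.

Definition quat (R : realType) := 'rV[R]_4.

Definition qc {R : realType} (x : quat R) (k : nat) : R := x ord0 (inord k).

Definition qmk {R : realType} (a0 a1 a2 a3 : R) : quat R :=
  \row_(i < 4) nth 0 [:: a0; a1; a2; a3] i.

Definition qmul {R : realType} (x y : quat R) : quat R :=
  qmk (qc x 0 * qc y 0 - qc x 1 * qc y 1 - qc x 2 * qc y 2 - qc x 3 * qc y 3)
      (qc x 0 * qc y 1 + qc x 1 * qc y 0 + qc x 2 * qc y 3 - qc x 3 * qc y 2)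
      (qc x 0 * qc y 2 - qc x 1 * qc y 3 + qc x 2 * qc y 0 + qc x 3 * qc y 1)
      (qc x 0 * qc y 3 + qc x 1 * qc y 2 - qc x 2 * qc y 1 + qc x 3 * qc y 0).

Definition qconj {R : realType} (x : quat R) : quat R :=
  qmk (qc x 0) (- qc x 1) (- qc x 2) (- qc x 3).

(* x = a + l b  has coordinates (a0,a1,a2,a3,b0,b1,b2,b3). *)
Definition oct (R : realType) := 'rV[R]_8.

Definition ofst {R : realType} (x : oct R) : quat R := \row_(i < 4) x ord0 (inord i).
Definition osnd {R : realType} (x : oct R) : quat R := \row_(i < 4) x ord0 (inord (i + 4)).
Definition omk {R : realType} (a b : quat R) : oct R :=
  \row_(i < 8) (if (i < 4)%N then a ord0 (inord i) else b ord0 (inord (i - 4))).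

(* Cayley--Dickson product (a + l b)(c + l d) = (ac - d conj(b)) + l(conj(a) d + c b) *)
Definition omul {R : realType} (x y : oct R) : oct R :=
  let a := ofst x in let b := osnd x in let c := ofst y in let d := osnd y in
  omk (qmul a c - qmul d (qconj b)) (qmul (qconj a) d + qmul c b).

Definition oreal {R : realType} (r : R) : oct R :=
  \row_(i < 8) (if val i == 0%N then r else 0).

Definition slice_unit {R : realType} (I : oct R) : Prop := omul I I = oreal (-1).

Definition oinner {R : realType} (x y : oct R) : R := \sum_(k < 8) x ord0 k * y ord0 k.

Definition pt2 {R : realType} (a b : R) : 'cV[R]_2 :=
  \col_(i < 2) (if val i == 0%N then a else b).

Definition vc {R : realType} {n : nat} (v : 'cV[R]_n.+1) (k : nat) : R := v (inord k) ord0.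

Definition ebasis {R : realType} {n : nat} (k : nat) : 'cV[R]_n.+1 := delta_mx (inord k) ord0.

Definition pderiv {R : realType} {n : nat} {V : normedModType R}
  (f : 'cV[R]_n.+1 -> V) (k : nat) (x : 'cV[R]_n.+1) : V := 'D_(ebasis k) f x.

Definition C1_on {R : realType} {n : nat} {V : normedModType R}
  (U : set 'cV[R]_n.+1) (f : 'cV[R]_n.+1 -> V) : Prop :=
  forall k : 'I_n.+1,
    (forall x, U x -> derivable f x (ebasis k)) /\
    (forall x, U x -> {for x, continuous (pderiv f k)}).

Definition OmegaD {R : realType} (D : set 'cV[R]_2) : set (oct R) :=
  [set q | exists x0 x1 I, D (pt2 x0 x1) /\ slice_unit I /\ q = oreal x0 + x1 *: I].

Definition Eset {R : realType} (D : set 'cV[R]_2) : set 'cV[R]_4 :=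
  [set v | D (pt2 (vc v 0) (Num.sqrt (vc v 1 ^+ 2 + vc v 2 ^+ 2 + vc v 3 ^+ 2)))].

Definition O3 {R : realType} (A : 'M[R]_4) : Prop :=
  A^T *m A = 1%:M /\ A *m ebasis 0 = ebasis 0.

Definition slice_regular {R : realType} (D : set 'cV[R]_2) (f : oct R -> oct R) : Prop :=
  exists F1 F2 : 'cV[R]_2 -> oct R,
    (forall x0 x1, D (pt2 x0 x1) ->
        F1 (pt2 x0 (- x1)) = F1 (pt2 x0 x1) /\ F2 (pt2 x0 (- x1)) = - F2 (pt2 x0 x1)) /\
    (forall x0 x1 I, D (pt2 x0 x1) -> slice_unit I ->
        f (oreal x0 + x1 *: I) = F1 (pt2 x0 x1) + omul I (F2 (pt2 x0 x1))) /\
    C1_on D F1 /\ C1_on D F2 /\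
    (forall p, D p ->
        pderiv F1 0 p = pderiv F2 1 p /\ pderiv F1 1 p = - pderiv F2 0 p).

(* cF : E -> O^4 is represented as a 4x8 matrix whose j-th row is cF_j;
   then the O(3)-action A cF(v) is the matrix product A *m cF(v). *)
Definition slice_Fueter_regular {R : realType} (D : set 'cV[R]_2) (f : oct R -> oct R) : Prop :=
  exists cF : 'cV[R]_4 -> 'M[R]_(4, 8),
    C1_on (Eset D) cF /\
    (forall A v, O3 A -> Eset D v -> cF (A *m v) = A *m cF v) /\
    (forall v I J, Eset D v -> slice_unit I -> slice_unit J -> oinner I J = 0 ->
        f (oreal (vc v 0) + vc v 1 *: I + vc v 2 *: J + vc v 3 *: omul I J) =
          row (inord 0) (cF v) + omul I (row (inord 1) (cF v))
          + omul J (row (inord 2) (cF v)) + omul (omul I J) (row (inord 3) (cF v))) /\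
    (forall v, Eset D v ->
       let d (i j : nat) : oct R := row (inord j) (pderiv cF i v) in
       [/\ d 0 0 - d 1 1 - d 2 2 - d 3 3 = 0,
           d 1 0 + d 0 1 - d 3 2 + d 2 3 = 0,
           d 2 0 + d 3 1 + d 0 2 - d 1 3 = 0 &
           d 3 0 - d 2 1 + d 1 2 + d 0 3 = 0]).

(* Conversely, the
   O(3)-equivariance of cF determines it near the axis in terms of the stem function
   (F1, F2): at (x0, t, 0, 0) we get cF_0 = F1(x0, t), cF_1 = F2(x0, t),
   cF_2 = cF_3 = 0, and at (x0, r, h, 0) rotation gives
   cF_2 = (h / rho) F2(x0, rho) with rho = sqrt(r^2 + h^2), so d_2 cF_2 = F2(x0, r) / r
   (likewise for d_3 cF_3). The first Fueter equation at (x0, r, 0, 0) therefore reads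
   d_0 F1 - d_1 F2 - 2 F2(x0, r) / r = 0, and the Cauchy--Riemann equation
   d_0 F1 = d_1 F2 forces F2 = 0 for r > 0, hence on all of D by oddness. Then F1 has
   vanishing partial derivatives, so f(x0 + x1 I) = F1(x0, |x1|) is locally constant
   on Omega_D, hence constant because Omega_D is connected. *)

From HB Require Import structures.
From mathcomp Require Import all_boot all_order all_algebra.
From mathcomp Require Import all_classical all_reals all_analysis.
From mathcomp Require Import ring lra.
Import Order.TTheory GRing.Theory Num.Theory.
Import numFieldNormedType.Exports.
Local Open Scope classical_set_scope.
Local Open Scope ring_scope.
Set Implicit Arguments.
Unset Strict Implicit.
Unset Printing Implicit Defensive.

Section Calculus.
Variable R : realType.

Lemma continuous_row m n (k : 'I_m) : continuous (fun M : 'M[R]_(m, n) => row k M).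
Proof.
move=> M s /nbhs_ballP[e e0 es]; apply/nbhs_ballP; exists e => //= N [_ MN].
by apply: es; split=> // i j; rewrite !mxE; exact: MN.
Qed.

Lemma quotient_is_derive (U V : normedModType R) (f : U -> V) x v l :
  h^-1 *: (f (h *: v + x) - f x) @[h --> 0^'] --> l -> is_derive x v f l.
Proof. by move=> fl; split; [exact: cvgP fl | exact: cvg_lim fl]. Qed.

Lemma derive_quotient_cvg (U V : normedModType R) (f : U -> V) x v (g : R -> V) l :
  (\forall h \near 0^', h^-1 *: (f (h *: v + x) - f x) = g h) ->
  g @ 0^' --> l -> 'D_v f x = l.
Proof.
move=> fg gl; apply: cvg_lim; first exact: norm_hausdorff.
apply: cvg_trans gl; apply: near_eq_cvg.
by near=> h; rewrite /= (near fg h).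
Unshelve. all: by end_near. Qed.

Lemma is_derive_near_line (U U' V : normedModType R) (f : U -> V) (g : U' -> V)
    x v y w l :
  (\forall h \near 0, f (h *: v + x) = g (h *: w + y)) ->
  is_derive y w g l -> is_derive x v f l.
Proof.
move=> fg [dg <-]; apply: quotient_is_derive.
have fxgy : f x = g y by have := nbhs_singleton fg; rewrite !scale0r !add0r.
apply: cvg_trans (dg : _ @ 0^' --> 'D_w g y); apply: near_eq_cvg.
by near=> h; rewrite /= fxgy (near (nbhs_dnbhs fg) h).
Unshelve. all: by end_near. Qed.

Lemma is_derive_linear (U V W : normedModType R) (phi : {linear V -> W}) (f : U -> V)
    x v :
  continuous phi -> derivable f x v -> is_derive x v (phi \o f) (phi ('D_v f x)).
Proof.
move=> cphi df; apply: quotient_is_derive.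
apply: cvg_trans (continuous_cvg _ (cphi _) df); apply: near_eq_cvg.
by near=> h; rewrite /= linearZ linearB.
Unshelve. all: by end_near. Qed.

Lemma derivable1_continuous (V : normedModType R) (g : R -> V) t :
  derivable g t 1 -> {for t, continuous g}.
Proof. by move=> dg; apply/differentiable_continuous/derivable1_diffP. Qed.

Lemma is_derive_coord n (g : R -> 'rV[R]_n) t j :
  derivable g t 1 -> is_derive t 1 (fun s => g s ord0 j) ('D_1 g t ord0 j).
Proof.
move=> dg; apply: quotient_is_derive.
apply: cvg_trans (continuous_cvg _ (@coord_continuous R 1 n ord0 j _) dg).
by apply: near_eq_cvg; near=> h; rewrite /= !mxE.
Unshelve. all: by end_near. Qed.

Lemma derive1_eq0_const n (g : R -> 'rV[R]_n) (a b : R) :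
  (forall t, Num.min a b <= t <= Num.max a b -> is_derive t 1 g 0) -> g a = g b.
Proof.
wlog ab : a b / a <= b => [hwlog|].
  case/orP: (le_total a b) => [/hwlog //|ba dg]; symmetry.
  by apply: (hwlog _ _ ba) => t; rewrite minC maxC; exact: dg.
rewrite (min_idPl ab) (max_idPr ab) => dg; apply/rowP => j.
have dgj t : a <= t <= b -> is_derive t 1 (fun s => g s ord0 j) 0.
  by move=> /dg[dgt Dgt]; have := is_derive_coord j dgt; rewrite Dgt mxE.
have dgj_open t : t \in `]a, b[ -> is_derive t 1 (fun s => g s ord0 j) 0.
  by rewrite in_itv /= => /andP[ta tb]; apply: dgj; rewrite !ltW.
have gj_cont : {within `[a, b], continuous (fun s => g s ord0 j)}.
  by apply: derivable_within_continuous => t; rewrite in_itv /= => /dgj[].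
have [c _] := MVT_segment ab dgj_open gj_cont.
by rewrite mul0r => /eqP; rewrite subr_eq0 => /eqP.
Qed.

Lemma sqrt_addr_sqr_cvg (r : R) : 0 <= r ->
  Num.sqrt (r ^+ 2 + h ^+ 2) @[h --> 0] --> r.
Proof.
move=> r0; suff : Num.sqrt (r ^+ 2 + h ^+ 2) @[h --> 0] --> Num.sqrt (r ^+ 2 + 0 ^+ 2).
  by rewrite expr0n /= addr0 sqrtr_sqr ger0_norm.
apply: continuous_cvg; first exact: sqrt_continuous.
by apply: cvgD; [exact: cvg_cst | exact: exprn_continuous].
Qed.

End Calculus.

Lemma connected_locally_const (T : topologicalType) (Y : Type) (A : set T) (g : T -> Y) a :
  connected A -> A a -> (forall x, A x -> \forall y \near x, A y -> g y = g x) ->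
  forall x, A x -> g x = g a.
Proof.
move=> cA Aa gloc.
pose B := [set x | A x /\ g x = g a].
have <- : B = A.
  apply: cA; first by exists a.
    exists (interior [set x | A x -> g x = g a]); first exact: open_interior.
    apply/seteqP; split=> x.
      case=> Ax gx; split=> //; rewrite /interior /=.
      by apply: filterS (gloc x Ax) => y gy Ay; rewrite gy.
    by case=> Ax /nbhs_singleton gx; split=> //; exact: gx.
  exists (~` interior [set x | A x -> g x <> g a]).
    by apply: open_closedC; exact: open_interior.
  apply/seteqP; split=> x.
    by case=> Ax gx; split=> // /nbhs_singleton; exact.
  case=> Ax nIx; split=> //; apply: contrapT => gxa; apply: nIx.
  by rewrite /interior /=; apply: filterS (gloc x Ax) => y gy Ay; rewrite gy.
by move=> x [].
Qed.


Section OctonionCoordinates.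
Variable R : realType.
Implicit Types (x y I J : oct R) (r : R).

Definition oc x (k : nat) : R := x ord0 (inord k).
Definition obase (j : nat) : oct R := \row_(i < 8) (val i == j)%:R.
Definition imnorm2 x : R := \sum_(k < 7) oc x k.+1 ^+ 2.

Lemma oct_ext x y : (forall k, (k < 8)%N -> oc x k = oc y k) -> x = y.
Proof.
move=> Hxy; apply/rowP => i; have := Hxy i (ltn_ord i).
by rewrite /oc inord_val [ord0]ord1.
Qed.

Lemma ocD x y k : oc (x + y) k = oc x k + oc y k. Proof. by rewrite /oc mxE. Qed.
Lemma ocN x k : oc (- x) k = - oc x k. Proof. by rewrite /oc mxE. Qed.
Lemma ocZ r x k : oc (r *: x) k = r * oc x k. Proof. by rewrite /oc mxE. Qed.
Lemma oc0 k : oc 0 k = 0. Proof. by rewrite /oc mxE. Qed.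

Lemma oc_real r k : (k < 8)%N -> oc (oreal r) k = if k == 0%N then r else 0.
Proof. by move=> k8; rewrite /oc mxE /= inordK. Qed.

Lemma oc_base j k : (k < 8)%N -> oc (obase j) k = (k == j)%:R.
Proof. by move=> k8; rewrite /oc mxE /= inordK. Qed.

Lemma imnorm2E x : imnorm2 x = oc x 1 ^+ 2 + oc x 2 ^+ 2 + oc x 3 ^+ 2 + oc x 4 ^+ 2
  + oc x 5 ^+ 2 + oc x 6 ^+ 2 + oc x 7 ^+ 2.
Proof. by rewrite /imnorm2 !big_ord_recl big_ord0 addr0 !addrA. Qed.

Lemma oinnerE x y : oinner x y = oc x 0 * oc y 0 + oc x 1 * oc y 1 + oc x 2 * oc y 2
  + oc x 3 * oc y 3 + oc x 4 * oc y 4 + oc x 5 * oc y 5 + oc x 6 * oc y 6 + oc x 7 * oc y 7.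
Proof.
rewrite /oinner /oc !big_ord_recl big_ord0 addr0 /= !addrA.
by repeat congr (_ + _); congr (_ * _); congr (_ _ _); apply/val_inj; rewrite /= inordK.
Qed.

Ltac unfold_omul := rewrite /oc /omul /omk /qconj /qmul /qmk /qc /ofst /osnd;
  repeat (rewrite mxE || rewrite inordK //=); rewrite -?/(oc _ _).

Lemma oc_omul0 x y : oc (omul x y) 0 =
  oc x 0 * oc y 0 - oc x 1 * oc y 1 - oc x 2 * oc y 2 - oc x 3 * oc y 3
  - oc y 4 * oc x 4 - oc y 5 * oc x 5 - oc y 6 * oc x 6 - oc y 7 * oc x 7.
Proof. by unfold_omul; ring. Qed.
Lemma oc_omul1 x y : oc (omul x y) 1 =
  oc x 0 * oc y 1 + oc x 1 * oc y 0 + oc x 2 * oc y 3 - oc x 3 * oc y 2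
  + oc y 4 * oc x 5 - oc y 5 * oc x 4 + oc y 6 * oc x 7 - oc y 7 * oc x 6.
Proof. by unfold_omul; ring. Qed.
Lemma oc_omul2 x y : oc (omul x y) 2 =
  oc x 0 * oc y 2 - oc x 1 * oc y 3 + oc x 2 * oc y 0 + oc x 3 * oc y 1
  + oc y 4 * oc x 6 - oc y 5 * oc x 7 - oc y 6 * oc x 4 + oc y 7 * oc x 5.
Proof. by unfold_omul; ring. Qed.
Lemma oc_omul3 x y : oc (omul x y) 3 =
  oc x 0 * oc y 3 + oc x 1 * oc y 2 - oc x 2 * oc y 1 + oc x 3 * oc y 0
  + oc y 4 * oc x 7 + oc y 5 * oc x 6 - oc y 6 * oc x 5 - oc y 7 * oc x 4.
Proof. by unfold_omul; ring. Qed.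
Lemma oc_omul4 x y : oc (omul x y) 4 =
  oc x 0 * oc y 4 + oc x 1 * oc y 5 + oc x 2 * oc y 6 + oc x 3 * oc y 7
  + oc y 0 * oc x 4 - oc y 1 * oc x 5 - oc y 2 * oc x 6 - oc y 3 * oc x 7.
Proof. by unfold_omul; ring. Qed.
Lemma oc_omul5 x y : oc (omul x y) 5 =
  oc x 0 * oc y 5 - oc x 1 * oc y 4 - oc x 2 * oc y 7 + oc x 3 * oc y 6
  + oc y 0 * oc x 5 + oc y 1 * oc x 4 + oc y 2 * oc x 7 - oc y 3 * oc x 6.
Proof. by unfold_omul; ring. Qed.
Lemma oc_omul6 x y : oc (omul x y) 6 =
  oc x 0 * oc y 6 + oc x 1 * oc y 7 - oc x 2 * oc y 4 - oc x 3 * oc y 5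
  + oc y 0 * oc x 6 - oc y 1 * oc x 7 + oc y 2 * oc x 4 + oc y 3 * oc x 5.
Proof. by unfold_omul; ring. Qed.
Lemma oc_omul7 x y : oc (omul x y) 7 =
  oc x 0 * oc y 7 - oc x 1 * oc y 6 + oc x 2 * oc y 5 - oc x 3 * oc y 4
  + oc y 0 * oc x 7 + oc y 1 * oc x 6 - oc y 2 * oc x 5 + oc y 3 * oc x 4.
Proof. by unfold_omul; ring. Qed.

Definition oc_omulE :=
  (oc_omul0, oc_omul1, oc_omul2, oc_omul3, oc_omul4, oc_omul5, oc_omul6, oc_omul7).

Ltac oct_coords := let k := fresh "k" in
  apply: oct_ext => k; case: k => [|[|[|[|[|[|[|[|//]]]]]]]] _.

Lemma omulr0 x : omul x 0 = 0.
Proof. by oct_coords; rewrite oc_omulE !oc0; ring. Qed.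

Lemma omulNr x y : omul (- x) y = - omul x y.
Proof. by oct_coords; rewrite !ocN !oc_omulE !ocN; ring. Qed.

Lemma omul_e1K y : omul (obase 1) (omul (obase 1) y) = - y.
Proof. by oct_coords; rewrite ocN !oc_omulE !oc_base //=; ring. Qed.

Lemma oct_eqN0 x : x = - x -> x = 0.
Proof.
by move=> xN; apply: oct_ext => k _; have := congr1 (oc^~ k) xN; rewrite ocN oc0; lra.
Qed.

Lemma imnorm2Z r x : imnorm2 (r *: x) = r ^+ 2 * imnorm2 x.
Proof. by rewrite !imnorm2E !ocZ; ring. Qed.

Lemma imnorm2_slice r0 r1 I : imnorm2 (oreal r0 + r1 *: I) = r1 ^+ 2 * imnorm2 I.
Proof. by rewrite !imnorm2E !ocD !ocZ !oc_real //=; ring. Qed.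

Lemma continuous_imnorm2 : continuous imnorm2.
Proof.
apply: continuous_big => [|k _ x]; first exact: add_continuous.
exact: (continuous_comp (@coord_continuous R 1 8 ord0 (inord k.+1) x)
                        (@exprn_continuous R 2 _)).
Qed.

(* [Re(I) (Re(I)^2 + 1)] is a linear combination of the coordinates of [I^2 + 1]. *)
Lemma slice_unitP I : slice_unit I <-> oc I 0 = 0 /\ imnorm2 I = 1.
Proof.
rewrite imnorm2E; split=> [sI|[I0 I1]]; last first.
  by rewrite /slice_unit; oct_coords; rewrite oc_omulE oc_real //= I0; lra.
have E : 2 * oc I 0 * (oc I 0 ^+ 2 + 1) = 2 * oc I 0 * (oc (omul I I) 0 + 1)
  + (oc I 1 * oc (omul I I) 1 + oc I 2 * oc (omul I I) 2 + oc I 3 * oc (omul I I) 3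
  + oc I 4 * oc (omul I I) 4 + oc I 5 * oc (omul I I) 5 + oc I 6 * oc (omul I I) 6
  + oc I 7 * oc (omul I I) 7) by rewrite !oc_omulE; ring.
rewrite sI !oc_real //= addNr !mulr0 !addr0 in E.
have I0 : oc I 0 = 0.
  move/eqP: E; rewrite !mulf_eq0 pnatr_eq0 /= => /orP[/eqP //|].
  by rewrite gt_eqF // ltr_pwDr // sqr_ge0.
split=> //; have := congr1 (oc^~ 0%N) sI.
by rewrite oc_omul0 oc_real //= I0; lra.
Qed.

End OctonionCoordinates.

Arguments obase {R} j.
Arguments oc {R} x k.

Section Points.
Context {R : realType}.
Implicit Types (a b c d h s t : R).

Definition pt4 a b c d : 'cV[R]_4 := \col_(i < 4) nth 0 [:: a; b; c; d] i.

Lemma pt2_seq a b : pt2 a b = \col_(i < 2) nth 0 [:: a; b] i.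
Proof. by apply/matrixP => -[[|[|//]] ?] j; rewrite !mxE. Qed.

Lemma ebasis_shift n (l : seq R) k h : (k <= n)%N ->
  h *: ebasis k + \col_(i < n.+1) nth 0 l i =
  \col_(i < n.+1) nth 0 (set_nth 0 l k (h + nth 0 l k)) i.
Proof.
move=> kn; apply/matrixP => i j; rewrite !mxE nth_set_nth /= -(inj_eq val_inj) /= inordK //.
by rewrite [j]ord1 eqxx andbT; case: eqP => [->|_]; rewrite ?mulr1 ?mulr0 ?add0r.
Qed.

Lemma pt2_shift0 h a b : h *: ebasis 0 + pt2 a b = pt2 (h + a) b.
Proof. by rewrite !pt2_seq ebasis_shift. Qed.

Lemma pt2_shift1 h a b : h *: ebasis 1 + pt2 a b = pt2 a (h + b).
Proof. by rewrite !pt2_seq ebasis_shift. Qed.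

Lemma pt4_shift0 h a b c d : h *: ebasis 0 + pt4 a b c d = pt4 (h + a) b c d.
Proof. exact: ebasis_shift. Qed.

Lemma pt4_shift1 h a b c d : h *: ebasis 1 + pt4 a b c d = pt4 a (h + b) c d.
Proof. exact: ebasis_shift. Qed.

Lemma vc_pt4 a b c d : [/\ vc (pt4 a b c d) 0 = a, vc (pt4 a b c d) 1 = b,
  vc (pt4 a b c d) 2 = c & vc (pt4 a b c d) 3 = d].
Proof. by rewrite /vc !mxE /= !inordK. Qed.

Lemma pt2_vc (p : 'cV[R]_2) : p = pt2 (vc p 0) (vc p 1).
Proof.
apply/matrixP => -[[|[|//]] i] j; rewrite [j]ord1 !mxE /vc /=;
  by congr (p _ _); apply/val_inj; rewrite /= inordK.
Qed.

Lemma Eset_pt4 (D : set 'cV[R]_2) a b c d :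
  Eset D (pt4 a b c d) = D (pt2 a (Num.sqrt (b ^+ 2 + c ^+ 2 + d ^+ 2))).
Proof. by rewrite /Eset /=; case: (vc_pt4 a b c d) => -> -> -> ->. Qed.

End Points.

Section Rotations.
Context {R : realType}.
Implicit Types (a c s t : R) (M : 'M[R]_(4, 8)).

(* rotation of the (e_1, e_q)-plane with cosine [c] and sine [s] *)
Definition rot (q : nat) c s : 'M[R]_4 := \matrix_(i, j)
  if i == j :> nat then (if (i == 1%N :> nat) || (i == q :> nat) then c else 1)
  else if (i == q :> nat) && (j == 1%N :> nat) then s
  else if (i == 1%N :> nat) && (j == q :> nat) then - s else 0.

Definition refl (q : nat) : 'M[R]_4 := \matrix_(i, j)
  if i == j :> nat then (if i == q :> nat then -1 else 1) else 0.

Ltac mx4_entries := apply/matrixP;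
  let i := fresh "i" in let j := fresh "j" in move=> i j;
  rewrite ?[j]ord1 !mxE !big_ord_recl big_ord0 addr0 !mxE -?(inj_eq val_inj) /=;
  case: i => [[|[|[|[|//]]]] ?] /=;
  try (case: j => [[|[|[|[|//]]]] ?] /=); rewrite ?inordK //=.

Lemma O3_rot q c s : q \in [:: 2; 3]%N -> c ^+ 2 + s ^+ 2 = 1 -> O3 (rot q c s).
Proof.
by move=> + cs; rewrite !inE => /orP[] /eqP -> ; split; mx4_entries; lra.
Qed.

Lemma O3_refl q : q \in [:: 2; 3]%N -> O3 (refl q).
Proof. by rewrite !inE => /orP[] /eqP -> ; split; mx4_entries; lra. Qed.

Lemma rot_axis q c s a t : q \in [:: 2; 3]%N ->
  rot q c s *m pt4 a t 0 0 = (s * t) *: ebasis q + pt4 a (c * t) 0 0.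
Proof.
by rewrite !inE => /orP[] /eqP ->; mx4_entries; ring.
Qed.

Lemma refl_axis q a t : q \in [:: 2; 3]%N -> refl q *m pt4 a t 0 0 = pt4 a t 0 0.
Proof.
by rewrite !inE => /orP[] /eqP ->; mx4_entries; ring.
Qed.

Lemma row_mul_sum (A : 'M[R]_4) M k :
  row k (A *m M) = \sum_(l < 4) A k l *: row l M.
Proof. by rewrite row_mul mulmx_sum_row; apply: eq_bigr => l _; rewrite mxE. Qed.

Lemma row_rot q c s M : q \in [:: 2; 3]%N ->
  row (inord q) (rot q c s *m M) = s *: row (inord 1) M + c *: row (inord q) M.
Proof.
rewrite row_mul_sum !big_ord_recl big_ord0 addr0 !mxE !inE => /orP[] /eqP -> /=;
  rewrite !inordK //= !scale0r ?add0r ?addr0; congr (_ *: row _ M + _ *: row _ M);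
  by apply/val_inj; rewrite /= inordK.
Qed.

Lemma row_refl q M : (q < 4)%N -> row (inord q) (refl q *m M) = - row (inord q) M.
Proof.
move=> q4; rewrite row_mul_sum (bigD1 (inord q)) //= big1 ?addr0.
  by rewrite mxE eqxx inordK // eqxx scaleN1r.
by move=> l; rewrite mxE -(inj_eq val_inj) eq_sym => /negbTE ->; rewrite scale0r.
Qed.

End Rotations.

Section PlanarBoxes.
Variable R : realType.

Lemma open_pt2_box (D : set 'cV[R]_2) (a b : R) : open D -> D (pt2 a b) ->
  exists2 e : R, 0 < e &
    forall a' b', `|a' - a| < e -> `|b' - b| < e -> D (pt2 a' b').
Proof.
move=> oD Dab; have /nbhs_ballP[e e0 eD] : nbhs (pt2 a b) D.
  exact: open_nbhs_nbhs.
exists e => // a' b' ha hb; apply: eD; split=> // i j; rewrite !mxE.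
by rewrite /ball /=; case: ifP; rewrite distrC.
Qed.

Lemma pderiv_eq0_box_const n (D : set 'cV[R]_2) (F : 'cV[R]_2 -> 'rV[R]_n) (a b : R) :
  open D -> (forall p k, D p -> (k < 2)%N -> is_derive p (ebasis k) F 0) ->
  D (pt2 a b) -> exists2 e : R, 0 < e & forall a' b', `|a' - a| < e -> `|b' - b| < e ->
    D (pt2 a' b') /\ F (pt2 a' b') = F (pt2 a b).
Proof.
move=> oD dF Dab; have [e e0 eD] := open_pt2_box oD Dab.
have between (c c' t : R) : `|c' - c| < e -> Num.min c' c <= t <= Num.max c' c -> `|t - c| < e.
  rewrite ge_min le_max !ltr_norml => /andP[h1 h2] /andP[/orP[] h3 /orP[] h4];
    apply/andP; split; lra.
have c0 (c : R) : `|c - c| < e by rewrite subrr normr0.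
exists e => // a' b' ha hb; split; first exact: eD.
transitivity (F (pt2 a b')).
  apply: (derive1_eq0_const (g := fun s => F (pt2 s b'))) => t /(between _ _ _ ha) ta.
  apply: (is_derive_near_line (g := F) (w := ebasis 0 : 'cV[R]_2) (y := pt2 t b')).
    by near=> h; rewrite pt2_shift0 [_%:A]mulr1.
  exact: dF (eD _ _ ta hb) _.
apply: (derive1_eq0_const (g := fun s => F (pt2 a s))) => t /(between _ _ _ hb) tb.
apply: (is_derive_near_line (g := F) (w := ebasis 1 : 'cV[R]_2) (y := pt2 a t)).
  by near=> h; rewrite pt2_shift1 [_%:A]mulr1.
exact: dF (eD _ _ (c0 a) tb) _.
Unshelve. all: by end_near. Qed.

End PlanarBoxes.

Section SliceUnits.
Context {R : realType}.

Lemma slice_unit_e1 : slice_unit (obase 1 : oct R).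
Proof. by apply/slice_unitP; rewrite imnorm2E !oc_base //=; split; ring. Qed.

Lemma slice_unit_Ne1 : slice_unit (- obase 1 : oct R).
Proof. by apply/slice_unitP; rewrite imnorm2E !ocN !oc_base //=; split; ring. Qed.

Lemma slice_unit_e2 : slice_unit (obase 2 : oct R).
Proof. by apply/slice_unitP; rewrite imnorm2E !oc_base //=; split; ring. Qed.

Lemma oinner_e1_e2 : oinner (obase 1) (obase 2 : oct R) = 0.
Proof. by rewrite oinnerE !oc_base //=; ring. Qed.

Lemma oinner_Ne1_e2 : oinner (- obase 1) (obase 2 : oct R) = 0.
Proof. by rewrite oinnerE !ocN !oc_base //=; ring. Qed.

End SliceUnits.

Section SliceDomain.
Variables (R : realType) (D : set 'cV[R]_2).
Implicit Types (I J : oct R).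

Lemma frame_combination I J x1 x2 x3 :
  slice_unit I -> slice_unit J -> oinner I J = 0 ->
  let K := x1 *: I + x2 *: J + x3 *: omul I J in
  oc K 0 = 0 /\ imnorm2 K = x1 ^+ 2 + x2 ^+ 2 + x3 ^+ 2.
Proof.
move=> /slice_unitP[I0 nI] /slice_unitP[J0 nJ] IJ K.
have [-> ->] : oc K 0 = - x3 * oinner I J /\
    imnorm2 K = x1 ^+ 2 * imnorm2 I + x2 ^+ 2 * imnorm2 J
      + x3 ^+ 2 * (imnorm2 I * imnorm2 J - oinner I J ^+ 2) + 2 * x1 * x2 * oinner I J.
  by rewrite /K !imnorm2E oinnerE !ocD !ocZ !oc_omulE I0 J0; split; ring.
by rewrite nI nJ IJ; split; ring.
Qed.

Lemma OmegaD_frame x0 x1 x2 x3 I J :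
  slice_unit I -> slice_unit J -> oinner I J = 0 ->
  D (pt2 x0 (Num.sqrt (x1 ^+ 2 + x2 ^+ 2 + x3 ^+ 2))) ->
  OmegaD D (oreal x0 + x1 *: I + x2 *: J + x3 *: omul I J).
Proof.
move=> sI sJ IJ; have [K0 nK] := frame_combination x1 x2 x3 sI sJ IJ.
set K := _ + _ + _ in K0 nK; set r := Num.sqrt _ => Dr.
have s_ge0 : 0 <= x1 ^+ 2 + x2 ^+ 2 + x3 ^+ 2 by rewrite !addr_ge0 ?sqr_ge0.
have [r0|r_neq0] := eqVneq r 0.
  have [-> -> ->] : [/\ x1 = 0, x2 = 0 & x3 = 0].
    move/eqP: r0; rewrite sqrtr_eq0 => s_le0.
    have : x1 ^+ 2 + x2 ^+ 2 + x3 ^+ 2 == 0 by rewrite eq_le s_le0 s_ge0.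
    rewrite !paddr_eq0 ?addr_ge0 ?sqr_ge0 // !sqrf_eq0.
    by case/andP=> /andP[/eqP-> /eqP->] /eqP->.
  rewrite r0 in Dr; exists x0, 0, (obase 1); rewrite !scale0r !addr0.
  by split=> //; split=> //; exact: slice_unit_e1.
exists x0, r, (r^-1 *: K); split=> //; split; last by rewrite scalerA mulfV // scale1r /K !addrA.
apply/slice_unitP; rewrite ocZ K0 mulr0 imnorm2Z nK exprVn -[X in _ * X]sqr_sqrtr //.
by rewrite -/r mulVf // sqrf_eq0.
Qed.

End SliceDomain.

Lemma pderiv_cst (R : realType) n (V : normedModType R) (c : V) k x :
  pderiv (fun _ : 'cV[R]_n.+1 => c) k x = 0.
Proof. exact: derive_cst. Qed.

Lemma C1_on_cst (R : realType) n (V : normedModType R) (U : set 'cV[R]_n.+1) (c : V) :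
  C1_on U (fun _ => c).
Proof.
move=> k; split=> [x _|x _]; first exact: derivable_cst.
rewrite (_ : pderiv _ k = cst 0); first exact: cst_continuous.
by apply: funext => y; exact: pderiv_cst.
Qed.

Section ConstantFunctions.
Variables (R : realType) (D : set 'cV[R]_2) (f : oct R -> oct R) (c : oct R).
Hypothesis f_cst : forall q, OmegaD D q -> f q = c.

Lemma slice_regular_cst : slice_regular D f.
Proof.
exists (fun _ => c), (fun _ => 0); split; first by move=> *; rewrite oppr0.
split; first by move=> x0 x1 I Dx sI; rewrite f_cst ?omulr0 ?addr0 //; exists x0, x1, I.
do 2 (split; first exact: C1_on_cst).
by move=> p _; rewrite !pderiv_cst oppr0.
Qed.

Lemma row_e0_mul (k : nat) : (k < 4)%N ->
  row (inord k) ((ebasis 0 : 'cV[R]_4) *m c) = (k == 0%N)%:R *: c.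
Proof.
move=> k4; apply/rowP => j; rewrite !mxE big_ord1 !mxE [ord0]ord1 /=.
by rewrite -(inj_eq val_inj) /= !inordK // eqxx andbT.
Qed.

Lemma slice_Fueter_regular_cst : slice_Fueter_regular D f.
Proof.
exists (fun _ => ebasis 0 *m c); split; first exact: C1_on_cst.
split; first by move=> A v [_ Ae0] _; rewrite mulmxA Ae0.
split.
  move=> v I J Ev sI sJ IJ; rewrite f_cst; last exact: OmegaD_frame.
  by rewrite !row_e0_mul //= scale1r !scale0r !omulr0 !addr0.
by move=> v _ /=; rewrite !pderiv_cst !row0 !subr0 !addr0.
Qed.

End ConstantFunctions.

Section SliceFueterRegularStem.
Variables (R : realType) (D : set 'cV[R]_2) (f : oct R -> oct R).
Hypothesis oD : open D.
Hypothesis D_sym : forall x0 x1 : R, D (pt2 x0 x1) -> D (pt2 x0 (- x1)).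
Variables (cF : 'cV[R]_4 -> 'M[R]_(4, 8)) (F1 F2 : 'cV[R]_2 -> oct R).
Hypothesis cF_C1 : C1_on (Eset D) cF.
Hypothesis cF_equiv : forall A v, O3 A -> Eset D v -> cF (A *m v) = A *m cF v.
Hypothesis cF_f : forall v I J, Eset D v -> slice_unit I -> slice_unit J -> oinner I J = 0 ->
  f (oreal (vc v 0) + vc v 1 *: I + vc v 2 *: J + vc v 3 *: omul I J) =
    row (inord 0) (cF v) + omul I (row (inord 1) (cF v))
    + omul J (row (inord 2) (cF v)) + omul (omul I J) (row (inord 3) (cF v)).
Hypothesis cF_Fueter0 : forall v, Eset D v ->
  row (inord 0) (pderiv cF 0 v) - row (inord 1) (pderiv cF 1 v)
  - row (inord 2) (pderiv cF 2 v) - row (inord 3) (pderiv cF 3 v) = 0.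
Hypothesis F_parity : forall x0 x1, D (pt2 x0 x1) ->
  F1 (pt2 x0 (- x1)) = F1 (pt2 x0 x1) /\ F2 (pt2 x0 (- x1)) = - F2 (pt2 x0 x1).
Hypothesis F_f : forall x0 x1 I, D (pt2 x0 x1) -> slice_unit I ->
  f (oreal x0 + x1 *: I) = F1 (pt2 x0 x1) + omul I (F2 (pt2 x0 x1)).
Hypothesis F1_C1 : C1_on D F1.
Hypothesis F2_C1 : C1_on D F2.
Hypothesis F_CR : forall p, D p ->
  pderiv F1 0 p = pderiv F2 1 p /\ pderiv F1 1 p = - pderiv F2 0 p.

Lemma axis_Eset a t : 0 <= t -> D (pt2 a t) -> Eset D (pt4 a t 0 0).
Proof. by move=> t0; rewrite Eset_pt4 expr0n /= !addr0 sqrtr_sqr ger0_norm. Qed.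

Lemma cF_derivable k v : (k < 4)%N -> Eset D v -> derivable cF v (ebasis k).
Proof. by move=> k4; exact: (cF_C1 (Ordinal k4)).1. Qed.

Lemma cF_axis_transverse a t q : 0 <= t -> D (pt2 a t) -> q \in [:: 2; 3]%N ->
  row (inord q) (cF (pt4 a t 0 0)) = 0.
Proof.
move=> t0 Dat hq; apply: oct_eqN0.
have := cF_equiv (O3_refl hq) (axis_Eset t0 Dat); rewrite refl_axis // => {1}->.
by rewrite row_refl //; move: hq; rewrite !inE => /orP[] /eqP ->.
Qed.

(* Taking [I = e1] and [I = -e1] (with [J = e2]) in the two representations of [f]
   at [x0 + t I] separates the even and odd parts. *)
Lemma cF_axis a t : 0 <= t -> D (pt2 a t) ->
  row (inord 0) (cF (pt4 a t 0 0)) = F1 (pt2 a t) /\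
  row (inord 1) (cF (pt4 a t 0 0)) = F2 (pt2 a t).
Proof.
move=> t0 Dat; have Ev := axis_Eset t0 Dat.
have [v0 v1 v2 v3] := vc_pt4 a t 0 0.
have h1 := cF_f Ev slice_unit_e1 slice_unit_e2 oinner_e1_e2.
have h2 := cF_f Ev slice_unit_Ne1 slice_unit_e2 oinner_Ne1_e2.
have r2 : row (inord 2) (cF (pt4 a t 0 0)) = 0 by exact: cF_axis_transverse.
have r3 : row (inord 3) (cF (pt4 a t 0 0)) = 0 by exact: cF_axis_transverse.
rewrite r2 r3 v0 v1 v2 v3 !omulr0 !scale0r !addr0 in h1 h2.
rewrite (F_f Dat slice_unit_e1) in h1.
rewrite (F_f Dat slice_unit_Ne1) !omulNr in h2.
set u := row _ (cF _) in h1 h2 *; set w := row _ (cF _) in h1 h2 *.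
have [-> e1w] : u = F1 (pt2 a t) /\ omul (obase 1) w = omul (obase 1) (F2 (pt2 a t)).
  by split; apply: oct_ext => k _; have := congr1 (oc^~ k) h1;
    have := congr1 (oc^~ k) h2; rewrite !ocD ?ocN; lra.
by split=> //; apply: oppr_inj; rewrite -!omul_e1K e1w.
Qed.

Lemma cF_rotated_row a t c s q : 0 <= t -> D (pt2 a t) -> q \in [:: 2; 3]%N ->
  c ^+ 2 + s ^+ 2 = 1 ->
  row (inord q) (cF ((s * t) *: ebasis q + pt4 a (c * t) 0 0)) = s *: F2 (pt2 a t).
Proof.
move=> t0 Dat hq cs; rewrite -rot_axis // (cF_equiv (O3_rot hq cs) (axis_Eset t0 Dat)).
by rewrite row_rot // (cF_axis t0 Dat).2 cF_axis_transverse // scaler0 addr0.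
Qed.

Lemma continuous_F2_x1 a r : D (pt2 a r) -> {for r, continuous (fun s => F2 (pt2 a s))}.
Proof.
move=> Dar; apply: derivable1_continuous.
have [] : is_derive r 1 (fun s => F2 (pt2 a s)) (pderiv F2 1 (pt2 a r)).
  apply: (is_derive_near_line (g := F2) (w := ebasis 1) (y := pt2 a r)).
    by near=> h; rewrite pt2_shift1 [_%:A]mulr1.
  exact/derivableP/(F2_C1 ord_max).1.
by [].
Unshelve. all: by end_near. Qed.

Lemma pderiv_cF_transverse a r q : 0 < r -> D (pt2 a r) -> q \in [:: 2; 3]%N ->
  row (inord q) (pderiv cF q (pt4 a r 0 0)) = r^-1 *: F2 (pt2 a r).
Proof.
move=> r0 Dar hq; have q4 : (q < 4)%N by move: hq; rewrite !inE => /orP[] /eqP ->.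
have Ev := axis_Eset (ltW r0) Dar.
have [_ <-] := is_derive_linear (phi := row (inord q)) (@continuous_row R 4 8 _)
  (cF_derivable q4 Ev).
have [e e0 eD] := open_pt2_box oD Dar.
pose rho h := Num.sqrt (r ^+ 2 + h ^+ 2).
have rho_gt0 h : 0 < rho h.
  by rewrite sqrtr_gt0 ltr_pwDl ?sqr_ge0 ?exprn_gt0.
have rho_r := sqrt_addr_sqr_cvg (ltW r0).
apply: (derive_quotient_cvg (g := fun h => (rho h)^-1 *: F2 (pt2 a (rho h)))).
  near=> h; have h0 : h != 0 by near: h; exact: nbhs_dnbhs_neq.
  have Drho : D (pt2 a (rho h)).
    apply: eD; first by rewrite subrr normr0.
    rewrite distrC; near: h; apply: nbhs_dnbhs; exact: cvgr_dist_lt rho_r _ e0.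
  have rho0 : rho h != 0 by rewrite gt_eqF.
  have cs : (r / rho h) ^+ 2 + (h / rho h) ^+ 2 = 1.
    have s_ge0 : 0 <= r ^+ 2 + h ^+ 2 by rewrite addr_ge0 ?sqr_ge0.
    by rewrite !expr_div_n -mulrDl -(sqr_sqrtr s_ge0) mulfV // sqrf_eq0.
  have -> : h *: ebasis q + pt4 a r 0 0 =
      (h / rho h * rho h) *: ebasis q + pt4 a (r / rho h * rho h) 0 0 by rewrite !divfK.
  rewrite /= cF_rotated_row ?(ltW (rho_gt0 h)) // cF_axis_transverse ?(ltW r0) //.
  by rewrite subr0 scalerA mulrA mulVf // mul1r.
apply: cvg_trans (cvg_app _ (@nbhs_dnbhs _ (0 : R))) _.
apply: cvgZ; first by apply: cvgV; [exact: lt0r_neq0 | exact: rho_r].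
exact: (cvg_comp _ _ rho_r (continuous_F2_x1 Dar)).
Unshelve. all: by end_near. Qed.

Lemma pderiv_cF_axial a r : 0 < r -> D (pt2 a r) ->
  row (inord 0) (pderiv cF 0 (pt4 a r 0 0)) = pderiv F1 0 (pt2 a r) /\
  row (inord 1) (pderiv cF 1 (pt4 a r 0 0)) = pderiv F2 1 (pt2 a r).
Proof.
move=> r0 Dar; have Ev := axis_Eset (ltW r0) Dar.
have [e e0 eD] := open_pt2_box oD Dar.
split.
- have [_ <-] := is_derive_linear (phi := row (inord 0)) (@continuous_row R 4 8 _)
    (cF_derivable (k := 0) isT Ev).
  have [] : is_derive (pt4 a r 0 0) (ebasis 0) (row (inord 0) \o cF) (pderiv F1 0 (pt2 a r)).
    apply: (is_derive_near_line (g := F1) (y := pt2 a r)); last first.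
      exact/derivableP/(F1_C1 ord0).1.
    near=> h; have he : `|h| < e by near: h; exact: cvgr0_norm_lt.
    have Dh : D (pt2 (h + a) r) by apply: eD; rewrite ?addrK ?subrr ?normr0.
    by rewrite /= pt4_shift0 pt2_shift0 (cF_axis (ltW r0) Dh).1.
  by [].
- have [_ <-] := is_derive_linear (phi := row (inord 1)) (@continuous_row R 4 8 _)
    (cF_derivable (k := 1) isT Ev).
  have [] : is_derive (pt4 a r 0 0) (ebasis 1) (row (inord 1) \o cF) (pderiv F2 1 (pt2 a r)).
    apply: (is_derive_near_line (g := F2) (y := pt2 a r)); last first.
      exact/derivableP/(F2_C1 ord_max).1.
    near=> h; have he : `|h| < e by near: h; exact: cvgr0_norm_lt.
    have hr : `|h| < r by near: h; exact: cvgr0_norm_lt.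
    have hr0 : 0 <= h + r by move: hr; rewrite ltr_norml; lra.
    have Dh : D (pt2 a (h + r)) by apply: eD; rewrite ?addrK ?subrr ?normr0.
    by rewrite /= pt4_shift1 pt2_shift1 (cF_axis hr0 Dh).2.
  by [].
Unshelve. all: by end_near. Qed.

Lemma F2_pos_eq0 a r : 0 < r -> D (pt2 a r) -> F2 (pt2 a r) = 0.
Proof.
move=> r0 Dar; have := cF_Fueter0 (axis_Eset (ltW r0) Dar).
have [-> ->] := pderiv_cF_axial r0 Dar.
rewrite (F_CR Dar).1 !pderiv_cF_transverse // => Fu.
have : r^-1 *: F2 (pt2 a r) = 0.
  by apply: oct_ext => k _; have := congr1 (oc^~ k) Fu; rewrite !ocD !ocN oc0; lra.
by move/eqP; rewrite scaler_eq0 invr_eq0 gt_eqF //= => /eqP.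
Qed.

Lemma F2_eq0 p : D p -> F2 p = 0.
Proof.
rewrite (pt2_vc p); set a := vc p 0; set b := vc p 1 => Dab.
case: (ltgtP b 0) => [b_lt0|b_gt0|b0]; last 2 first.
- exact: F2_pos_eq0.
- by apply: oct_eqN0; rewrite -(F_parity Dab).2 b0 oppr0.
apply/eqP; rewrite -oppr_eq0 -(F_parity Dab).2 F2_pos_eq0 ?oppr_gt0 //.
exact: D_sym.
Qed.

Lemma is_derive_F1_eq0 p k : D p -> (k < 2)%N -> is_derive p (ebasis k) F1 0.
Proof.
move=> Dp k2; have Dnear : \forall q \near p, D q by exact: open_nbhs_nbhs.
have dF2 j : is_derive p (ebasis j) F2 0.
  apply: (near_eq_is_derive (f := cst (0 : oct R))).
  by near=> q; rewrite /= F2_eq0 //; near: q.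
apply: DeriveDef; first exact: (F1_C1 (Ordinal k2)).1.
have [CR0 CR1] := F_CR Dp; have [[_ dF2_0] [_ dF2_1]] := (dF2 0%N, dF2 1%N).
case: k k2 => [|[|//]] _.
- by rewrite -[LHS]/(pderiv F1 0 p) CR0.
- by rewrite -[LHS]/(pderiv F1 1 p) CR1 -oppr0; congr (- _).
Unshelve. all: by end_near. Qed.

Lemma f_OmegaD q : OmegaD D q ->
  D (pt2 (oc q 0) (Num.sqrt (imnorm2 q))) /\ f q = F1 (pt2 (oc q 0) (Num.sqrt (imnorm2 q))).
Proof.
case=> x0 [x1 [I [Dx [/[dup] sI /slice_unitP[I0 nI] ->]]]].
rewrite imnorm2_slice nI mulr1 sqrtr_sqr ocD ocZ I0 mulr0 addr0 oc_real //=.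
rewrite F_f // F2_eq0 // omulr0 addr0.
have [x1_ge0|x1_lt0] := lerP 0 x1; first by rewrite ger0_norm.
by rewrite ltr0_norm // (F_parity Dx).1; split=> //; exact: D_sym.
Qed.

Lemma f_locally_const q : OmegaD D q -> \forall q' \near q, OmegaD D q' -> f q' = f q.
Proof.
move=> Oq; have [Dq fq] := f_OmegaD Oq.
have [e e0 F1_box] := pderiv_eq0_box_const oD is_derive_F1_eq0 Dq.
have re_q : (fun q' : oct R => oc q' 0) @ q --> oc q 0 := @coord_continuous R 1 8 ord0 _ q.
have im_q : (fun q' : oct R => Num.sqrt (imnorm2 q')) @ q --> Num.sqrt (imnorm2 q).
  exact: (continuous_comp (@continuous_imnorm2 R q) (@sqrt_continuous R _)).
near=> q' => Oq'; have [_ ->] := f_OmegaD Oq'; rewrite fq.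
apply: (F1_box _ _ _ _).2; rewrite distrC.
  by near: q'; exact: cvgr_dist_lt re_q _ e0.
by near: q'; exact: cvgr_dist_lt im_q _ e0.
Unshelve. all: by end_near. Qed.

End SliceFueterRegularStem.

Theorem corollary2p4 (R : realType) (D : set 'cV[R]_2) (f : oct R -> oct R) :
  open D -> D !=set0 ->
  (forall x0 x1 : R, D (pt2 x0 x1) -> D (pt2 x0 (- x1))) ->
  connected (OmegaD D) ->
  (slice_Fueter_regular D f /\ slice_regular D f <->
   exists c : oct R, forall q, OmegaD D q -> f q = c).
Proof.
move=> oD [p Dp] D_sym conn; split=> [|[c f_c]]; last first.
  by split; [exact: slice_Fueter_regular_cst f_c | exact: slice_regular_cst f_c].
case=> -[cF [cF_C1 [cF_equiv [cF_f cF_Fueter]]]].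
case=> F1 [F2 [F_parity [F_f [F1_C1 [F2_C1 F_CR]]]]].
pose q0 := oreal (vc p 0) + vc p 1 *: obase 1.
have Oq0 : OmegaD D q0.
  exists (vc p 0), (vc p 1), (obase 1); rewrite -pt2_vc.
  by split=> //; split=> //; exact: slice_unit_e1.
exists (f q0); apply: connected_locally_const conn Oq0 _ => q Oq.
have cF_Fueter0 v Ev := let: And4 Fu _ _ _ := cF_Fueter v Ev in Fu.
exact: (f_locally_const oD D_sym cF_C1 cF_equiv cF_f cF_Fueter0 F_parity F_f F1_C1 F2_C1 F_CR).
Qed.
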